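(* Let $G$ be a connected graph, $c\in V(G)$, and run the scan procedure at $c$ (with any processing order). Let $e$ and $f$ be distinct edges incident to $c$. If at least one of the following holds: (a) $e$ and $f$ span a square that has a chord; (b) $e$ and $f$ span a square whose top vertex is not unique; (c) $e$ and $f$ span more than one square; then $(e,f)\in\beta_c^*$, the transitive closure of $\beta_c$.
   Context: All graphs are finite, simple, undirected; $N(x)$ is the open neighborhood of $x$. For distinct edges $e=vu$, $f=vw$ sharing the vertex $v$, a square spanned by $e$ and $f$ is a 4-cycle $vuxw$ with $x\ne v$ adjacent to both $u$ and $w$; $x$ is its top vertex. The square has a chord if $uw\in E$ or $vx\in E$. A top vertex $x$ is unique if $|N(x)\cap N(v)|=2$. Scan procedure at $c$: the vertices of $N(c)$ are called primal, and edges incident to $c$ primal edges. Maintain two sets $I$ (incidence list) and $A$ (absence list) of unordered pairs of primal edges, both initially empty, and for every non-primal vertex $w\ne c$ a record of at most two ''recorded primal neighbors'' (first and second), initially none. Process the neighbors $u$ of $c$ one by one in an arbitrary order, and for each such $u$ process its neighbors $w\neq c$ in an arbitrary order: (1) if $w\in N(c)$, add $\{cu,cw\}$ to $A$; (2) else, if $w$ has no recorded primal neighbor, record $u$ as its first primal neighbor; (3) else, if $w$ has exactly one recorded primal neighbor $v$, record $u$ as its second primal neighbor, and if $\{cu,cv\}\notin I$ add $\{cu,cv\}$ to $I$, otherwise add $\{cu,cv\}$ to $A$; (4) else ($w$ has recorded first and second primal neighbors $v_1,v_2$) add $\{cv_1,cv_2\},\{cv_1,cu\},\{cv_2,cu\}$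 to $A$ (the record is not changed). After the procedure, $\alpha_c$ is the symmetric relation on primal edges consisting of the pairs in $I$, $\beta_c$ the symmetric relation consisting of the pairs in $A$, and $\overline{\alpha}_c$ the set of pairs of primal edges not in $I$. *)

From Stdlib Require Import Relations.
From mathcomp Require Import all_boot.
Set Implicit Arguments. Unset Strict Implicit. Unset Printing Implicit Defensive.

(* A simple graph: vertex type T (finite), adjacency adj (symmetric, irreflexive).
   A primal edge c--u is identified with its primal endpoint u. *)

Definition connected_graph (T : finType) (adj : rel T) : Prop :=
  forall x y : T, connect adj x y.

(* State of the scan procedure: incidence list I, absence list A (sets of
   unordered pairs of primal edges, stored with both orientations), and the
   record of recorded primal neighbors (at most two, in order first, second). *)
Record scan_state (T : finType) := ScanState {
  st_I : {set T * T};
  st_A : {set T * T};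
  st_rec : T -> seq T }.

Definition add_pair (T : finType) (S : {set T * T}) (a b : T) : {set T * T} :=
  S :|: [set (a, b); (b, a)].

Definition upd_rec (T : finType) (r : T -> seq T) (w : T) (s : seq T) : T -> seq T :=
  fun y => if y == w then s else r y.

Definition scan_step_w (T : finType) (adj : rel T) (c u : T)
    (st : scan_state T) (w : T) : scan_state T :=
  let: ScanState Ii Aa r := st in
  if adj c w then ScanState Ii (add_pair Aa u w) r
  else match r w with
       | [::] => ScanState Ii Aa (upd_rec r w [:: u])
       | [:: v] =>
           if (u, v) \notin Ii then ScanState (add_pair Ii u v) Aa (upd_rec r w [:: v; u])
           else ScanState Ii (add_pair Aa u v) (upd_rec r w [:: v; u])
       | v1 :: v2 :: _ =>
           ScanState Ii (add_pair (add_pair (add_pair Aa v1 v2) v1 u) v2 u) r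
       end.

Definition scan_step_u (T : finType) (adj : rel T) (c : T) (nbr : T -> seq T)
    (st : scan_state T) (u : T) : scan_state T :=
  foldl (scan_step_w adj c u) st (nbr u).

Definition scan_init (T : finType) : scan_state T :=
  ScanState set0 set0 (fun _ => [::]).

Definition scan (T : finType) (adj : rel T) (c : T) (ord : seq T)
    (nbr : T -> seq T) : scan_state T :=
  foldl (scan_step_u adj c nbr) (scan_init T) ord.

Definition valid_order (T : finType) (adj : rel T) (c : T) (ord : seq T)
    (nbr : T -> seq T) : Prop :=
  uniq ord /\ (forall u, (u \in ord) = adj c u) /\
  (forall u, adj c u -> uniq (nbr u) /\ forall w, (w \in nbr u) = adj u w && (w != c)).

Definition beta_c (T : finType) (adj : rel T) (c : T) (ord : seq T)
    (nbr : T -> seq T) : relation T :=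
  fun u v => (u, v) \in st_A (scan adj c ord nbr).

Definition square_top (T : finType) (adj : rel T) (c u w x : T) : Prop :=
  x != c /\ adj u x /\ adj w x.

Definition square_has_chord (T : finType) (adj : rel T) (c u w x : T) : Prop :=
  adj u w \/ adj c x.

Definition unique_top (T : finType) (adj : rel T) (c x : T) : Prop :=
  #|[set y | adj x y && adj c y]| = 2.

From Pilot Require Import Defs.
From Stdlib Require Import Relations.
From mathcomp Require Import all_boot.
Set Implicit Arguments. Unset Strict Implicit. Unset Printing Implicit Defensive.

(* The scan at c is a left fold over a flat list of "events" (u, w): primal
   vertex u processing its neighbor w.  For a non-primal vertex x, the
   primal vertices reaching x, in processing order, form the list of
   "visitors" of x; the record of x always holds its first two visitors.
   From this one reads off three sources of absence pairs:
   - an edge u--w between primal vertices puts {cu, cw} in A directly;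
   - if x has at least three visitors a, b, z, ..., the third and every later
     visitor y puts {a, b} and {a, y} in A, so all visitors are
     beta-related through the first one;
   - if two distinct non-primal vertices both have exactly the visitors u, w,
     the earlier second visit puts {u, w} in I and the later one, finding it
     there, moves it to A.
   The theorem follows: a chord yields a primal edge (u--w, or c--x giving
   u -- x -- w); a non-unique top x is primal or has >= 3 visitors; and two
   tops are primal, crowded, or both have exactly the visitors u, w. *)

Section ScanRun.
Variables (T : finType) (adj : rel T) (c : T).

Definition scan_event (st : scan_state T) (e : T * T) : scan_state T :=
  scan_step_w adj c e.1 st e.2.

Definition run (s : seq (T * T)) : scan_state T := foldl scan_event (scan_init T) s.

Definition visitors (x : T) (s : seq (T * T)) : seq T := [seq e.1 | e <- s & e.2 == x].

Definition scan_events (ord : seq T) (nbr : T -> seq T) : seq (T * T) :=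
  flatten [seq [seq (u, w) | w <- nbr u] | u <- ord].

Lemma scan_run ord nbr : scan adj c ord nbr = run (scan_events ord nbr).
Proof.
rewrite /scan /run /scan_events; elim: ord (scan_init T) => //= u ord IH st.
rewrite foldl_cat -IH /scan_step_u; congr foldl.
by elim: (nbr u) st => //= w l IHl st; rewrite IHl.
Qed.

Lemma scan_event_mono st e :
  st_I st \subset st_I (scan_event st e) /\ st_A st \subset st_A (scan_event st e).
Proof.
case: st e => I A r [u w]; rewrite /scan_event /=.
case: (adj c w) => /=; first by rewrite subxx subsetUl.
case: (r w) => [|v [|v2 l]] /=; try by rewrite subxx.
  by case: ifP => _ /=; rewrite subxx subsetUl.
by rewrite subxx /Defs.add_pair -!setUA subsetUl.
Qed.

Lemma run_mono p q :
  st_I (run p) \subset st_I (run (p ++ q)) /\ st_A (run p) \subset st_A (run (p ++ q)).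
Proof.
rewrite /run foldl_cat; elim: q (foldl _ _ p) => [|e q IH] st /=; first by rewrite !subxx.
have [hI hA] := scan_event_mono st e; have [hI' hA'] := IH (scan_event st e).
by split; apply: subset_trans; eassumption.
Qed.

Lemma I_persists p e q a b :
  (a, b) \in st_I (scan_event (run p) e) -> (a, b) \in st_I (run (p ++ e :: q)).
Proof.
by move=> h; rewrite -cat_rcons; apply: (subsetP (run_mono _ _).1); rewrite /run foldl_rcons.
Qed.

Lemma A_persists p e q a b :
  (a, b) \in st_A (scan_event (run p) e) -> (a, b) \in st_A (run (p ++ e :: q)).
Proof.
by move=> h; rewrite -cat_rcons; apply: (subsetP (run_mono _ _).2); rewrite /run foldl_rcons.
Qed.

Definition sym_pairs (S : {set T * T}) : Prop := forall a b, (a, b) \in S -> (b, a) \in S.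

Lemma sym_add_pair S a b : sym_pairs S -> sym_pairs (Defs.add_pair S a b).
Proof.
move=> hS x y; rewrite /Defs.add_pair !inE => /orP[/hS -> //|/orP[]] /eqP[-> ->];
  by rewrite eqxx !orbT.
Qed.

Lemma run_sym s : sym_pairs (st_I (run s)) /\ sym_pairs (st_A (run s)).
Proof.
elim/last_ind: s => [|s e [hI hA]]; first by split=> a b; rewrite inE.
rewrite /run foldl_rcons; move: hI hA; rewrite /run.
case: (foldl _ _ s) e => I A r [u w]; rewrite /scan_event /= => hI hA.
case: (adj c w) => /=; first by split; [|apply: sym_add_pair].
case: (r w) => [|v [|v2 l]] //=; first by case: ifP => _; split=> //; apply: sym_add_pair.
by split=> //; do 3 apply: sym_add_pair.
Qed.

Lemma run_rec s x : ~~ adj c x -> st_rec (run s) x = take 2 (visitors x s).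
Proof.
move=> hx; elim/last_ind: s => [|s [u w] IH] //.
rewrite /run foldl_rcons -cats1 /visitors filter_cat map_cat -/(visitors x s) /=.
move: IH; rewrite /run; case: (foldl _ _ s) => I A r /= IH.
rewrite /scan_event /=; case: (eqVneq w x) => [->|hwx] /=.
  rewrite (negbTE hx) IH /upd_rec.
  case E: (visitors x s) => [|v [|v2 l]] /=; last by rewrite IH E /= !take0.
  - by rewrite eqxx.
  - by case: ((u, v) \in I); rewrite /= eqxx.
rewrite cats0 -IH; case: (adj c w) => //=.
have hxw : (x == w) = false by rewrite eq_sym (negbTE hwx).
case: (r w) => [|v [|v2 l]] /=; rewrite ?/upd_rec ?hxw //.
by case: ifP => _ /=; rewrite hxw.
Qed.

Lemma event_primal st u w : adj c w -> (u, w) \in st_A (scan_event st (u, w)).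
Proof. by case: st => I A r /= ->; rewrite !inE eqxx !orbT. Qed.

Lemma event_second st u x v : ~~ adj c x -> st_rec st x = [:: v] ->
  (u, v) \in st_I (scan_event st (u, x)) /\
  ((u, v) \in st_I st -> (u, v) \in st_A (scan_event st (u, x))).
Proof.
case: st => I A r; rewrite /scan_event /= => /negbTE -> -> /=.
by case hI: ((u, v) \in I); split=> //=; rewrite ?hI // !inE eqxx ?orbT.
Qed.

Lemma event_third st u x v1 v2 : ~~ adj c x -> st_rec st x = [:: v1; v2] ->
  (v1, v2) \in st_A (scan_event st (u, x)) /\ (v1, u) \in st_A (scan_event st (u, x)).
Proof.
by case: st => I A r; rewrite /scan_event /= => /negbTE -> -> /=; rewrite !inE !eqxx !orbT.
Qed.

Lemma visitors_cat x p q : visitors x (p ++ q) = visitors x p ++ visitors x q.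
Proof. by rewrite /visitors filter_cat map_cat. Qed.

Lemma visitors_split x y p q : visitors x (p ++ (y, x) :: q) = visitors x p ++ y :: visitors x q.
Proof. by rewrite visitors_cat /visitors /= eqxx. Qed.

Lemma visitors_of_primal x u l : uniq l ->
  visitors x [seq (u, w) | w <- l] = if x \in l then [:: u] else [::].
Proof.
move=> ul; rewrite /visitors filter_map -map_comp.
case: ifP => hx; first by rewrite (eq_filter (_ : _ =1 pred1 x)) ?filter_pred1_uniq.
rewrite (eq_in_filter (_ : {in l, _ =1 pred0})) ?filter_pred0 //.
by move=> y hy /=; apply/eqP => eyx; rewrite -eyx hy in hx.
Qed.

Lemma visitor_event x y s : y \in visitors x s -> (y, x) \in s.
Proof. by move=> /mapP[[a b]]; rewrite mem_filter /= => /andP[/eqP -> h] ->. Qed.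

Lemma later_visitor s x a b l y : ~~ adj c x -> uniq [:: a, b & l] ->
  visitors x s = [:: a, b & l] -> y \in l ->
  (a, b) \in st_A (run s) /\ (a, y) \in st_A (run s).
Proof.
move=> hx /= /andP[]; rewrite inE negb_or => /andP[_ nal] /andP[nbl _] hV hy.
have hyV : y \in visitors x s by rewrite hV !inE hy !orbT.
case/splitPr: {hyV}(visitor_event hyV) hV => p q; rewrite visitors_split.
have hrec := run_rec p hx; case: (visitors x p) hrec => [|a' [|b' l']] //= hrec.
- by case=> ya; rewrite -ya hy in nal.
- by case=> _ yb; rewrite -yb hy in nbl.
- case=> <- <- _; rewrite take0 in hrec.
  by have [hab hay] := event_third y hx hrec; split; apply: A_persists.
Qed.

Lemma crowded_related s x u w : ~~ adj c x -> uniq (visitors x s) ->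
  2 < size (visitors x s) -> u \in visitors x s -> w \in visitors x s -> u != w ->
  clos_trans T (fun a b => (a, b) \in st_A (run s)) u w.
Proof.
move=> hx; case hV: (visitors x s) => [|a [|b [|z l]]] //= hu _.
have first_rel y : y \in [:: b, z & l] -> (a, y) \in st_A (run s).
  rewrite inE => /orP[/eqP ->|hy].
    by apply: (later_visitor hx hu hV (mem_head z l)).1.
  exact: (later_visitor hx hu hV hy).2.
have [_ symA] := run_sym s.
rewrite inE => /orP[/eqP ->|/first_rel hau]; rewrite inE => /orP[/eqP ->|/first_rel haw].
- by rewrite eqxx.
- by move=> _; apply: t_step.
- by move=> _; apply/t_step/symA.
- by move=> _; apply: (t_trans _ _ _ a); apply: t_step => //; apply: symA.
Qed.

Lemma visitors_before_second s x a b p q : visitors x s = [:: a; b] -> a != b ->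
  s = p ++ (b, x) :: q -> visitors x p = [:: a].
Proof.
move=> hV nab hs; move: hV; rewrite hs visitors_split.
case: (visitors x p) => [|a' [|b' l]] //=; first by case=> ab; rewrite ab eqxx in nab.
- by case=> ->.
- by case=> _ _; case: l.
Qed.

Lemma second_visit_I s x a b p r : ~~ adj c x -> visitors x s = [:: a; b] -> a != b ->
  s = p ++ r -> (b, x) \in p -> (a, b) \in st_I (run p).
Proof.
move=> hx hV nab hs hb; move: hV; rewrite hs; case/splitPr: hb => p1 p2; rewrite -catA => hV.
have hrec := run_rec p1 hx; rewrite (visitors_before_second hV nab (erefl _)) in hrec.
apply: (run_sym _).1; apply: I_persists; exact: (event_second b hx hrec).1.
Qed.

Lemma second_visit_A s x a b p r : ~~ adj c x -> visitors x s = [:: a; b] -> a != b ->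
  s = p ++ (b, x) :: r -> (a, b) \in st_I (run p) -> (a, b) \in st_A (run s).
Proof.
move=> hx hV nab hs /(run_sym p).1 hI.
have hrec := run_rec p hx; rewrite (visitors_before_second hV nab hs) in hrec.
by apply: (run_sym s).2; rewrite hs; apply: A_persists; exact: (event_second b hx hrec).2 hI.
Qed.

Lemma perm_pair (a b u w : T) : perm_eq [:: a; b] [:: u; w] ->
  (u, w) = (a, b) \/ (u, w) = (b, a).
Proof.
move=> hp; have: u \in [:: a; b] by rewrite (perm_mem hp) mem_head.
rewrite !inE => /orP[] /eqP eu; [left | right]; rewrite eu in hp *.
  by move: hp; rewrite perm_cons => /(@perm_small_eq _ _ [:: w] isT) [->].
move: hp; rewrite -[[:: a; b]]/([:: a] ++ [:: b]) perm_catC perm_cons.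
by move=> /(@perm_small_eq _ _ [:: w] isT) [->].
Qed.

Lemma sym_perm_pair S a b u w : sym_pairs S -> perm_eq [:: a; b] [:: u; w] ->
  (a, b) \in S -> (u, w) \in S.
Proof. by move=> hS /perm_pair[] [-> ->] // /hS. Qed.

Lemma repeated_pair_ordered s x1 x2 a1 b1 a2 b2 u w p r :
  ~~ adj c x1 -> ~~ adj c x2 ->
  visitors x1 s = [:: a1; b1] -> visitors x2 s = [:: a2; b2] -> a1 != b1 -> a2 != b2 ->
  perm_eq [:: a1; b1] [:: u; w] -> perm_eq [:: a2; b2] [:: u; w] ->
  s = p ++ (b2, x2) :: r -> (b1, x1) \in p -> (u, w) \in st_A (run s).
Proof.
move=> h1 h2 hV1 hV2 n1 n2 hp1 hp2 hs hb1.
have hI1 := second_visit_I h1 hV1 n1 hs hb1.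
have hI2 : (a2, b2) \in st_I (run p).
  apply: (sym_perm_pair (run_sym p).1 _ (sym_perm_pair (run_sym p).1 hp1 hI1)).
  by rewrite perm_sym.
exact: sym_perm_pair (run_sym s).2 hp2 (second_visit_A h2 hV2 n2 hs hI2).
Qed.

Lemma repeated_pair s x1 x2 u w : ~~ adj c x1 -> ~~ adj c x2 -> x1 != x2 ->
  perm_eq (visitors x1 s) [:: u; w] -> perm_eq (visitors x2 s) [:: u; w] -> u != w ->
  (u, w) \in st_A (run s).
Proof.
move=> h1 h2 nx hp1 hp2 nuw.
have two_visitors x : perm_eq (visitors x s) [:: u; w] ->
    exists a b, [/\ visitors x s = [:: a; b], a != b, perm_eq [:: a; b] [:: u; w]
                  & (b, x) \in s].
  move=> hp; move: (perm_uniq hp) (perm_size hp); rewrite /= inE nuw.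
  case hV: (visitors x s) => [|a [|b [|z l]]] //=; rewrite inE andbT => nab _.
  exists a, b; split=> //; first by rewrite -hV.
  by apply: visitor_event; rewrite hV !inE eqxx orbT.
have [a1 [b1 [hV1 n1 uw1 e1]]] := two_visitors x1 hp1.
have [a2 [b2 [hV2 n2 uw2 e2]]] := two_visitors x2 hp2.
case/splitPr: e1 e2 hV1 hV2 => p q.
rewrite mem_cat inE => /orP[/splitPr[p1 p2]|/orP[/eqP[_ ex]|/splitPr[q1 q2]]] hV1 hV2.
- apply: (repeated_pair_ordered h2 h1 hV2 hV1 n2 n1 uw2 uw1 (erefl _)).
  by rewrite mem_cat mem_head orbT.
- by rewrite ex eqxx in nx.
- move: hV1 hV2; rewrite -cat_cons catA => hV1 hV2.
  apply: (repeated_pair_ordered h1 h2 hV1 hV2 n1 n2 uw1 uw2 (erefl _)).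
  by rewrite mem_cat mem_head orbT.
Qed.

End ScanRun.

Section ScanAtC.
Variables (T : finType) (adj : rel T) (c : T) (ord : seq T) (nbr : T -> seq T).
Hypotheses (adj_sym : symmetric adj) (adj_irr : irreflexive adj).
Hypothesis Hord : valid_order adj c ord nbr.

Local Notation events := (scan_events ord nbr).
Local Notation beta := (beta_c adj c ord nbr).

Lemma beta_run : beta = fun a b => (a, b) \in st_A (run adj c events).
Proof. by rewrite /beta_c scan_run. Qed.

Lemma beta_sym a b : beta a b -> beta b a.
Proof. by rewrite beta_run; apply: (run_sym _ _ _).2. Qed.

Lemma visitors_events x : visitors x events = [seq u <- ord | x \in nbr u].
Proof.
have [_ [mem_ord nbr_ok]] := Hord.
have uniq_nbr u : u \in ord -> uniq (nbr u) by rewrite mem_ord => /nbr_ok[].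
elim: ord uniq_nbr {mem_ord} => //= u o IH uniq_nbr.
rewrite /scan_events /= visitors_cat -/(scan_events o nbr) IH; last first.
  by move=> v hv; apply: uniq_nbr; rewrite inE hv orbT.
by rewrite visitors_of_primal ?uniq_nbr ?mem_head //; case: ifP.
Qed.

Lemma visitors_uniq x : uniq (visitors x events).
Proof. by have [uo _] := Hord; rewrite visitors_events filter_uniq. Qed.

Lemma mem_visitors x y : x != c -> (y \in visitors x events) = adj c y && adj y x.
Proof.
have [_ [mem_ord nbr_ok]] := Hord.
move=> xc; rewrite visitors_events mem_filter mem_ord andbC.
by case hy: (adj c y); rewrite ?andbF // (nbr_ok y hy).2 xc andbT.
Qed.

Lemma primal_edge_beta a b : adj c a -> adj c b -> adj a b -> beta a b.
Proof.
have [_ [mem_ord nbr_ok]] := Hord.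
move=> ha hb hab; have bc : b != c by apply: contraTneq hb => ->; rewrite adj_irr.
have : (a, b) \in events.
  apply/flattenP; exists [seq (a, w) | w <- nbr a]; first by apply: map_f; rewrite mem_ord.
  by apply: map_f; rewrite (nbr_ok a ha).2 hab bc.
rewrite beta_run => /splitPr[p q]; exact/A_persists/event_primal.
Qed.

Lemma chord_beta u w x : adj c u -> adj c w ->
  square_top adj c u w x -> square_has_chord adj c u w x -> clos_trans T beta u w.
Proof.
move=> hu hw [_ [hux hwx]] [huw|hcx]; first exact/t_step/primal_edge_beta.
by apply: (t_trans _ _ _ x); apply: t_step; [|apply: beta_sym]; apply: primal_edge_beta.
Qed.

Lemma top_dichotomy u w x : adj c u -> adj c w -> u != w -> square_top adj c u w x ->
  clos_trans T beta u w \/ ~~ adj c x /\ perm_eq (visitors x events) [:: u; w].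
Proof.
move=> hu hw nuw top; have [xc [hux hwx]] := top.
case hcx: (adj c x); first by left; apply: chord_beta hu hw top _; right.
have uV : u \in visitors x events by rewrite mem_visitors // hu hux.
have wV : w \in visitors x events by rewrite mem_visitors // hw hwx.
case: (ltnP 2 (size (visitors x events))) => hsize.
  left; rewrite beta_run.
  exact: crowded_related (negbT hcx) (visitors_uniq x) hsize uV wV nuw.
right; split=> //; rewrite perm_sym uniq_perm ?visitors_uniq //= ?inE ?nuw //.
have uw_sub : {subset [:: u; w] <= visitors x events}.
  by move=> y; rewrite !inE => /orP[] /eqP ->.
by case: (uniq_min_size (_ : uniq [:: u; w]) uw_sub hsize); rewrite /= ?inE ?nuw.
Qed.

Lemma nonunique_top_beta u w x : adj c u -> adj c w -> u != w ->
  square_top adj c u w x -> ~ unique_top adj c x -> clos_trans T beta u w.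
Proof.
move=> hu hw nuw top not_unique.
have [//|[_ hperm]] := top_dichotomy hu hw nuw top; case: not_unique.
have [xc _] := top.
rewrite /unique_top -(card_uniqP _ : #|[:: u; w]| = 2); last by rewrite /= inE nuw.
apply: eq_card => y; rewrite inE -(perm_mem hperm) mem_visitors //.
by rewrite andbC [adj y x]adj_sym.
Qed.

Lemma two_tops_beta u w x1 x2 : adj c u -> adj c w -> u != w -> x1 != x2 ->
  square_top adj c u w x1 -> square_top adj c u w x2 -> clos_trans T beta u w.
Proof.
move=> hu hw nuw nx top1 top2.
have [//|[h1 hp1]] := top_dichotomy hu hw nuw top1.
have [//|[h2 hp2]] := top_dichotomy hu hw nuw top2.
by rewrite beta_run; apply/t_step/(repeated_pair h1 h2 nx hp1 hp2 nuw).
Qed.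

End ScanAtC.

(* The three hypotheses are handled by the three cases above. *)
Theorem mainTheorem4 (T : finType) (adj : rel T)
  (adj_sym : symmetric adj) (adj_irr : irreflexive adj)
  (Gconn : connected_graph adj)
  (c : T) (ord : seq T) (nbr : T -> seq T)
  (Hord : valid_order adj c ord nbr)
  (u w : T) (Hu : adj c u) (Hw : adj c w) (Huw : u != w) :
  ((exists x, square_top adj c u w x /\ square_has_chord adj c u w x) \/
   (exists x, square_top adj c u w x /\ ~ unique_top adj c x) \/
   (exists x1 x2, x1 != x2 /\ square_top adj c u w x1 /\ square_top adj c u w x2)) ->
  clos_trans T (beta_c adj c ord nbr) u w.
Proof.
case=> [[x [top chord]]|[[x [top not_unique]]|[x1 [x2 [nx [top1 top2]]]]]].
- exact (chord_beta adj_irr Hord Hu Hw top chord).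
- exact (nonunique_top_beta adj_sym adj_irr Hord Hu Hw Huw top not_unique).
- exact (two_tops_beta adj_irr Hord Hu Hw Huw nx top1 top2).
Qed.
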